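(* Let $q$ be a prime power and $k\ge 1$ an integer. A simple graph $G$ satisfies $\operatorname{mr}(\mathbb{F}_q,G)\le k$ (i.e. $G\in\mathcal{G}_k(\mathbb{F}_q)$) if and only if $G$ is a blowup of some graph of the form $H\cup K_1$ with $H\in\mathfrak{g}_k(\mathbb{F}_q)$, where $K_1$ denotes a single isolated nonlooped vertex and $\cup$ is disjoint union.
   Context: Graphs may have loops but no multiple edges; a simple graph has no loops. For a field $F$ and a simple graph $G$ on vertices $\{1,\dots,n\}$, $S(F,G)$ is the set of symmetric $n\times n$ matrices $A$ over $F$ with $a_{ij}\neq 0$ for $i\ne j$ iff $ij$ is an edge of $G$ (diagonal entries unrestricted); $\operatorname{mr}(F,G)=\min\{\operatorname{rank}A: A\in S(F,G)\}$ and $\mathcal{G}_k(F)=\{G:\operatorname{mr}(F,G)\le k\}$. For a symmetric $n\times n$ matrix $A$, the looped graph corresponding to $A$, $\Gamma(A)$, has vertex set $\{1,\dots,n\}$, an edge $ij$ ($i\neq j$) iff $a_{ij}\neq0$, and a loop at $i$ iff $a_{ii}\ne 0$. Definition of $\mathfrak{g}_k(\mathbb{F}_q)$: let $x_1,\dots,x_m$ be representatives of the classes of nonzero vectors of $\mathbb{F}_q^k$ under the relation $x\sim cx$ ($c\in\mathbb{F}_q$, $c\neq0$), and let $U=[x_1\ \cdots\ x_m]$ be the $k\times m$ matrix with these columns; $\mathfrak{g}_k(\mathbb{F}_q)$ is the set of isomorphism classes of looped graphs $\Gamma(U^tBU)$ as $B$ ranges over the invertible symmetric $k\times k$ matrices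 over $\mathbb{F}_q$ (equivalently over a set of representatives of congruence classes $B\mapsto C^tBC$, $C$ invertible). A blowup of a looped graph $G$ with vertices $v_1,\dots,v_n$ is a simple graph obtained by replacing each nonlooped vertex $v_i$ by a (possibly empty) independent set $V_i$, each looped vertex $v_i$ by a (possibly empty) clique $V_i$, and each edge $v_iv_j$ ($i\ne j$) by all edges $xy$ with $x\in V_i$, $y\in V_j$. *)

From HB Require Import structures.
From mathcomp Require Import all_boot all_order all_algebra all_fingroup all_field.
Set Implicit Arguments. Unset Strict Implicit. Unset Printing Implicit Defensive.
Import GRing.Theory.
Local Open Scope ring_scope.

(* A simple graph on 'I_n is a symmetric irreflexive relation (hypotheses
   stated in the theorem).  S(F,G): symmetric matrices whose off-diagonal
   nonzero pattern is the edge set of G. *)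
Definition inS (F : fieldType) (n : nat) (G : rel 'I_n) (A : 'M[F]_n) : bool :=
  (A^T == A) && [forall i, forall j, (i != j) ==> ((A i j != 0) == G i j)].

(* mr(F,G) = min rank over S(F,G) (over a finite field the matrices form a
   finite type; S(F,G) is never empty, so the default n is never used). *)
Definition mr (F : finFieldType) (n : nat) (G : rel 'I_n) : nat :=
  \big[minn/n]_(A : 'M[F]_n | inS G A) \rank A.

(* A looped graph on a finite vertex type V is a symmetric relation L;
   L v v means v carries a loop.  Gamma A: edge ij iff a_ij != 0, loop at i
   iff a_ii != 0. *)
Definition Gamma (F : fieldType) (p : nat) (A : 'M[F]_p) : rel 'I_p :=
  fun i j => A i j != 0.

Definition addK1 (V : Type) (L : rel V) : rel (option V) :=
  fun x y => match x, y with Some a, Some b => L a b | _, _ => false end.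

(* G (simple, on 'I_n) is a blowup of the looped graph L: each vertex x of G
   lies in the part V_(f x); distinct vertices x, y are adjacent iff
   f x, f y are adjacent in L (loops give cliques, nonloops independent sets,
   parts may be empty). *)
Definition is_blowup (n : nat) (G : rel 'I_n) (V : finType) (L : rel V) : Prop :=
  exists f : 'I_n -> V, forall x y : 'I_n, x != y -> G x y = L (f x) (f y).

(* U : k x m has as columns a set of representatives of the nonzero vectors
   of F^k modulo nonzero scalars. *)
Definition proj_reps (F : fieldType) (k m : nat) (U : 'M[F]_(k, m)) : Prop :=
  [/\ forall j, col j U != 0,
      forall j j' (c : F), j != j' -> col j U != c *: col j' U
    & forall x : 'cV[F]_k, x != 0 -> exists j (c : F), x = c *: col j U].

From mathcomp Require Import all_boot all_algebra.
Set Implicit Arguments. Unset Strict Implicit. Unset Printing Implicit Defensive.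
Import GRing.Theory.
Local Open Scope ring_scope.

(* Both directions rest on one computation: if every column of Y : k x n is
   either zero or a nonzero multiple of a column of U (a "representation" of
   a map f : 'I_n -> option 'I_m, None marking the zero columns), then the
   entry (x, y) of Y^T B Y is nonzero iff f x, f y are adjacent in
   Gamma(U^T B U) + K_1 (lemma [pattern_represents]).
   - Low rank => blowup: a symmetric matrix of rank <= k is congruent-factored
     as Y^T B Y with Y : k x n and B invertible symmetric k x k (section
     SymmetricFactorization); since the columns of U represent all projective
     points, Y represents the map sending x to the class of its column.
   - Blowup => low rank: the blowup map f is represented by the matrix
     [expand U f] whose columns are the chosen columns of U, so
     A = Y^T B Y lies in S(F,G) and has rank <= k.
   Finally mr(F,G) is a minimum that is attained (S(F,G) contains the
   adjacency matrix), which links mr(F,G) <= k with the two directions. *)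

Section SymmetricFactorization.
Variable F : fieldType.

Definition sym_factorization n (A : 'M[F]_n) (s : nat) : Prop :=
  exists (Y : 'M[F]_(s, n)) (B : 'M[F]_s),
    [/\ B^T = B, B \in unitmx & A = Y^T *m B *m Y].

(* With W a row basis of A, the matrix C := W'^T A W' (W' a right inverse of
   W) is symmetric, satisfies A = W^T C W, and has full rank \rank A. *)
Lemma sym_factorization_rank n (A : 'M[F]_n) :
  A^T = A -> sym_factorization A (\rank A).
Proof.
move=> A_sym; set W := row_base A; set W' := pinvmx W.
have A_W : A = A *m W' *m W by rewrite mulmxKpV // eq_row_base.
have A_WT : A = W^T *m W'^T *m A.
  by rewrite -{1}A_sym {1}A_W !trmx_mul A_sym mulmxA.
clearbody W W'; set C := W'^T *m A *m W'.
have A_C : A = W^T *m C *m W.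
  by rewrite /C -!mulmxA [A *m (W' *m W)]mulmxA -A_W mulmxA -A_WT.
exists W, C; split=> //.
- by rewrite /C !trmx_mul trmxK A_sym mulmxA.
- rewrite -row_free_unit /row_free eqn_leq rank_leq_row /=.
  apply: leq_trans (mxrankM_maxr W^T C).
  by rewrite {1}A_C mxrankM_maxl.
Qed.

(* Padding B with a 1 x 1 identity block (and Y with a zero row) increases
   the size of the factorization by one. *)
Lemma sym_factorization_pad n (A : 'M[F]_n) s :
  sym_factorization A s -> sym_factorization A s.+1.
Proof.
case=> Y [B [B_sym B_unit ->]].
exists (col_mx (0 : 'M_(1, n)) Y : 'M_(1 + s, n)).
exists (block_mx (1%:M : 'M_1) 0 0 B : 'M_(1 + s)); split.
- by have := tr_block_mx (1%:M : 'M[F]_1) 0 0 B; rewrite B_sym !trmx0 trmx1.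
- have := det_ublock (1%:M : 'M[F]_1) 0 B; rewrite det1 mul1r => det_pad.
  by rewrite unitmxE det_pad -unitmxE.
- have := tr_col_mx (0 : 'M[F]_(1, n)) Y; rewrite trmx0 => ->.
  have padded : row_mx (0 : 'M[F]_(n, 1)) Y^T *m block_mx (1%:M : 'M[F]_1) 0 0 B
                 *m col_mx (0 : 'M[F]_(1, n)) Y = Y^T *m B *m Y.
    by rewrite mul_row_block mul_row_col !mulmx0 !add0r.
  exact: (esym padded).
Qed.

Lemma sym_factorization_le n (A : 'M[F]_n) s :
  A^T = A -> (\rank A <= s)%N -> sym_factorization A s.
Proof.
move=> A_sym; elim: s => [|s IH].
  by rewrite leqn0 => /eqP <-; apply: sym_factorization_rank.
rewrite leq_eqVlt => /orP [/eqP <-|]; first exact: sym_factorization_rank.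
by rewrite ltnS => /IH; apply: sym_factorization_pad.
Qed.

End SymmetricFactorization.

Lemma bilinear_entry (F : fieldType) k n p (Y : 'M[F]_(k, n)) (B : 'M[F]_k)
    (Z : 'M[F]_(k, p)) x y :
  (Y^T *m B *m Z) x y = ((col x Y)^T *m B *m col y Z) 0 0.
Proof.
rewrite !mxE; apply: eq_bigr => l _; rewrite !mxE; congr (_ * _).
by apply: eq_bigr => i _; rewrite !mxE.
Qed.

Lemma bilinearZ (F : fieldType) k (B : 'M[F]_k) (u v : 'cV[F]_k) c d :
  (c *: u)^T *m B *m (d *: v) = (c * d) *: (u^T *m B *m v).
Proof. by rewrite [(c *: u)^T]linearZ -!scalemxAl -scalemxAr scalerA. Qed.

Section Representation.
Variables (F : fieldType) (k m : nat) (U : 'M[F]_(k, m)).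

Definition represents n (Y : 'M[F]_(k, n)) (f : 'I_n -> option 'I_m) : Prop :=
  forall x, if f x is Some j then exists2 c, c != 0 & col x Y = c *: col j U
            else col x Y = 0.

Lemma pattern_represents n (Y : 'M[F]_(k, n)) f (B : 'M[F]_k) :
  represents Y f -> forall x y,
  ((Y^T *m B *m Y) x y != 0) = addK1 (Gamma (U^T *m B *m U)) (f x) (f y).
Proof.
move=> Yf x y; rewrite bilinear_entry /addK1 /Gamma.
have := Yf x; case: (f x) => [a [c c0 ->]|->]; last first.
  by rewrite trmx0 !mul0mx mxE eqxx.
have := Yf y; case: (f y) => [b [d d0 ->]|->]; last first.
  by rewrite mulmx0 mxE eqxx.
by rewrite bilinearZ mxE -bilinear_entry !mulf_eq0 negb_or negb_or c0 d0.
Qed.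

Definition expand n (f : 'I_n -> option 'I_m) : 'M[F]_(k, n) :=
  \matrix_(i, x) oapp (fun j => U i j) 0 (f x).

Lemma expand_represents n (f : 'I_n -> option 'I_m) : represents (expand f) f.
Proof.
move=> x; case fx: (f x) => [j|]; last first.
  by apply/matrixP => i z; rewrite !mxE fx.
by exists 1; rewrite ?oner_eq0 // scale1r; apply/matrixP => i z; rewrite !mxE fx.
Qed.

End Representation.

Section ProjectiveClass.
Variables (F : finFieldType) (k m : nat) (U : 'M[F]_(k, m)).

Definition proj_class (v : 'cV[F]_k) : option 'I_m :=
  if v == 0 then None else [pick j | [exists c : F, v == c *: col j U]].

Lemma proj_class_represents n (Y : 'M[F]_(k, n)) :
  proj_reps U -> represents U Y (fun x => proj_class (col x Y)).
Proof.
case=> _ _ U_cover x; rewrite /proj_class.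
have [//|Yx_neq0] := eqVneq (col x Y) 0.
case: pickP => [j /existsP [c /eqP Yx]|no_class].
  by exists c => //; apply: contraNneq Yx_neq0 => c0; rewrite Yx c0 scale0r.
have [j [c Yx]] := U_cover _ Yx_neq0.
by have /existsP[] := negbT (no_class j); exists c; rewrite Yx.
Qed.

End ProjectiveClass.

Lemma bigmin_le (I : finType) (P : pred I) (f : I -> nat) idx i :
  P i -> (\big[minn/idx]_(j | P j) f j <= f i)%N.
Proof.
move=> Pi; have : i \in index_enum I by rewrite mem_index_enum.
elim: (index_enum I) => [//|a s IH]; rewrite inE big_cons.
case/orP => [/eqP <-|i_s]; first by rewrite Pi geq_minl.
case: (P a); last exact: IH.
exact: leq_trans (geq_minr _ _) (IH i_s).
Qed.

Lemma bigmin_attained (I : finType) (P : pred I) (f : I -> nat) idx :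
  \big[minn/idx]_(j | P j) f j = idx \/
  exists2 i, P i & \big[minn/idx]_(j | P j) f j = f i.
Proof.
apply: (big_ind (fun v => v = idx \/ exists2 i, P i & v = f i)).
- by left.
- by move=> a b a_attained b_attained /=; case: leqP.
- by move=> i Pi; right; exists i.
Qed.

Section MinimumRank.
Variables (F : finFieldType) (n : nat) (G : rel 'I_n).

Lemma mr_le_rank (A : 'M[F]_n) : inS G A -> (mr F G <= \rank A)%N.
Proof. exact: bigmin_le. Qed.

Definition adjacency_mx : 'M[F]_n := \matrix_(i, j) (G i j)%:R.

Lemma adjacency_inS : symmetric G -> inS G adjacency_mx.
Proof.
move=> G_sym; apply/andP; split.
  by apply/eqP/matrixP => i j; rewrite !mxE G_sym.
apply/forallP => x; apply/forallP => y; apply/implyP => _.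
by rewrite mxE; case: (G x y); rewrite ?oner_eq0 ?eqxx.
Qed.

Lemma mr_attained : symmetric G -> exists2 A : 'M[F]_n, inS G A & \rank A = mr F G.
Proof.
move=> G_sym; have := bigmin_attained (@inS F n G) (fun A => \rank A) n.
rewrite -/(mr F G) => -[mr_n|[A S_A mr_A]]; last by exists A.
exists adjacency_mx; first exact: adjacency_inS.
apply/eqP; rewrite eqn_leq mr_le_rank ?adjacency_inS // andbT mr_n.
exact: rank_leq_row.
Qed.

End MinimumRank.

Lemma blowup_of_low_rank (F : finFieldType) k m n (U : 'M[F]_(k, m))
    (G : rel 'I_n) (A : 'M[F]_n) :
  proj_reps U -> inS G A -> (\rank A <= k)%N ->
  exists B : 'M[F]_k,
    [/\ B^T = B, B \in unitmx & is_blowup G (addK1 (Gamma (U^T *m B *m U)))].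
Proof.
move=> hU /andP [/eqP A_sym /forallP A_pattern] A_rank.
have [Y [B [B_sym B_unit A_YBY]]] := sym_factorization_le A_sym A_rank.
exists B; split=> //; exists (fun x => proj_class U (col x Y)) => x y xy.
rewrite -(pattern_represents B (proj_class_represents Y hU)) -A_YBY.
by have /forallP /(_ y) /implyP /(_ xy) /eqP := A_pattern x.
Qed.

Lemma low_rank_of_blowup (F : fieldType) k m n (U : 'M[F]_(k, m))
    (G : rel 'I_n) (B : 'M[F]_k) :
  B^T = B -> is_blowup G (addK1 (Gamma (U^T *m B *m U))) ->
  exists2 A : 'M[F]_n, inS G A & (\rank A <= k)%N.
Proof.
move=> B_sym [f G_f]; exists ((expand U f)^T *m B *m expand U f).
  apply/andP; split; first by rewrite !trmx_mul trmxK B_sym mulmxA.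
  apply/forallP => x; apply/forallP => y; apply/implyP => xy.
  by rewrite (pattern_represents B (expand_represents U f)) G_f.
exact: leq_trans (mxrankM_maxr _ _) (rank_leq_row _).
Qed.

Theorem mainTheorem1 (F : finFieldType) (k m n : nat) (U : 'M[F]_(k, m))
    (hU : proj_reps U) (G : rel 'I_n)
    (Gsym : symmetric G) (Girr : irreflexive G) :
  (1 <= k)%N ->
  ((mr F G <= k)%N <->
   exists B : 'M[F]_k,
     [/\ B^T = B, B \in unitmx & is_blowup G (addK1 (Gamma (U^T *m B *m U)))]).
Proof.
move=> _; split.
- have [A S_A <-] := mr_attained F Gsym.
  exact: blowup_of_low_rank hU S_A.
- case=> B [B_sym _ G_blowup].
  have [A S_A A_rank] := low_rank_of_blowup B_sym G_blowup.
  exact: leq_trans (mr_le_rank S_A) A_rank.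
Qed.
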